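(* Let $\mathcal{H}\subseteq\{0,1\}^{\mathcal{X}}$ be a concept class and let $\omega_m$ denote the clique number of $G_m(\mathcal{H})$. Then exactly one of the following holds: (1) $\omega_m=2^m$ for all $m\in\mathbb{N}$; (2) there is a polynomial $P$ such that $\omega_m\le P(m)$ for all $m\in\mathbb{N}$.
   Context: For $m\in\mathbb{N}$, a dataset of size $m$ is a sequence $S=((x_1,y_1),\dots,(x_m,y_m))\in(\mathcal{X}\times\{0,1\})^m$; a hypothesis $h\in\{0,1\}^{\mathcal{X}}$ is consistent with $S$ if $h(x_i)=y_i$ for all $i$; $S$ is $\mathcal{H}$-realizable if some $h\in\mathcal{H}$ is consistent with $S$. We write $(x,y)\in S$ if $(x,y)=(x_i,y_i)$ for some $i$. Let $V_m(\mathcal{H})$ be the set of $\mathcal{H}$-realizable datasets of size $m$. The contradiction graph of order $m$, $G_m(\mathcal{H})$, is the undirected graph with vertex set $V_m(\mathcal{H})$ in which two datasets $S,S'$ are adjacent iff there is $x\in\mathcal{X}$ with $(x,0)\in S$ and $(x,1)\in S'$. The clique number of a graph is the supremum of the sizes of its cliques. *)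

From HB Require Import structures.
From mathcomp Require Import all_boot all_order all_algebra.
From mathcomp Require Import Rstruct.
From Stdlib Require Import Rdefinitions.
From Stdlib Require List.
Set Implicit Arguments. Unset Strict Implicit. Unset Printing Implicit Defensive.
Import GRing.Theory Num.Theory.
Local Open Scope ring_scope.

Definition dataset (X : Type) := seq (X * bool).

Definition consistent (X : Type) (h : X -> bool) (S : dataset X) : Prop :=
  forall p, List.In p S -> h p.1 = p.2.

Definition realizable (X : Type) (H : (X -> bool) -> Prop) (S : dataset X) : Prop :=
  exists h, H h /\ consistent h S.

(* vertices of G_m(H): H-realizable datasets of size m *)
Definition vertex (X : Type) (H : (X -> bool) -> Prop) (m : nat) (S : dataset X) : Prop :=
  size S = m /\ realizable H S.

Definition contradicts (X : Type) (S S' : dataset X) : Prop :=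
  exists x, List.In (x, false) S /\ List.In (x, true) S'.

Definition adjacent (X : Type) (S S' : dataset X) : Prop :=
  contradicts S S' \/ contradicts S' S.

Definition has_clique (X : Type) (H : (X -> bool) -> Prop) (m k : nat) : Prop :=
  exists f : 'I_k -> dataset X,
    injective f /\ (forall i, vertex H m (f i)) /\
    (forall i j, i != j -> adjacent (f i) (f j)).

(* clique number of G_m(H) (a supremum, possibly infinite) is equal to k *)
Definition clique_number_eq (X : Type) (H : (X -> bool) -> Prop) (m k : nat) : Prop :=
  has_clique H m k /\ (forall n, has_clique H m n -> leq n k).

Definition clique_number_le (X : Type) (H : (X -> bool) -> Prop) (m : nat) (r : R) : Prop :=
  forall n, has_clique H m n -> (n%:R <= r).

(* If H shatters mistake trees of every depth, the 2^m labelings along the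
   branches of a depth-m tree are pairwise contradicting realizable datasets, so
   omega_m = 2^m; omega_m <= 2^m always, by Kraft's inequality. If H shatters no
   tree of depth d, cliques are bounded by induction on d: each edge of a clique
   is charged to an example (x, b) of one endpoint such that the restriction of
   H to x |-> ~b shatters no tree of depth d-1, and the datasets charged to one
   example form a clique realizable by that restriction; hence
   omega_m <= (2m+1)^d. As no polynomial dominates 2^m, the two cases exclude
   each other. *)

From HB Require Import structures.
From mathcomp Require Import all_boot all_order all_algebra.
From mathcomp Require Import Rstruct.
From Stdlib Require Import Rdefinitions.
From Stdlib Require Import Classical ClassicalEpsilon.
From mathcomp Require Import zify.
Set Implicit Arguments. Unset Strict Implicit. Unset Printing Implicit Defensive.
Import GRing.Theory Num.Theory.
(* Rdefinitions takes over [^] in nat_scope. *)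
Local Notation "m ^ n" := (expn m n) : nat_scope.

(* X has no decidable equality: example points are compared classically. *)
Definition classicb (P : Prop) : bool :=
  if excluded_middle_informative P then true else false.

Lemma classicbP (P : Prop) : reflect P (classicb P).
Proof. by rewrite /classicb; case: excluded_middle_informative => h; constructor. Qed.

Lemma In_filter (T : Type) (q : pred T) a s :
  List.In a (filter q s) <-> List.In a s /\ q a.
Proof.
elim: s => [|b s IH] /=; first by split=> // -[].
case: ifP => qb /=; rewrite IH; split.
- by case=> [<-|[]]; auto.
- by case=> [[<-|]] ?; auto.
- by case=> ?; auto.
- by case=> [[<-|]] //; rewrite qb.
Qed.

Lemma size_filter_lt (T : Type) (q : pred T) a s :
  List.In a s -> ~~ q a -> size (filter q s) < size s.
Proof.
elim: s => //= b s IH [<- /negbTE ->|/IH lt_s /lt_s {}lt_s].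
  by rewrite ltnS size_filter count_size.
by case: (q b); rewrite /= ltnS ?lt_s // ltnW.
Qed.

Lemma filter_id_In (T : Type) (q : pred T) s :
  (forall a, List.In a s -> q a) -> filter q s = s.
Proof.
elim: s => //= b s IH qs; rewrite qs; last by left.
by rewrite IH // => a sa; apply: qs; right.
Qed.

Lemma card_bigcup_seq_le (T : Type) (I : finType) (s : seq T) (N : T -> {set I}) c :
  (forall e, List.In e s -> #|N e| <= c) -> #|\bigcup_(e <- s) N e| <= size s * c.
Proof.
elim: s => [|e s IH] N_le; first by rewrite big_nil cards0.
rewrite big_cons mulSn (leq_trans (leq_card_setU _ _)) // leq_add //.
  by apply: N_le; left.
by apply: IH => e' se'; apply: N_le; right.
Qed.

Lemma sub_bigcup_seq (T : Type) (I : finType) (s : seq T) (N : T -> {set I}) e :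
  List.In e s -> N e \subset \bigcup_(e <- s) N e.
Proof.
elim: s => //= e' s IH [<-|/IH sub_s]; rewrite big_cons; first exact: subsetUl.
exact: subset_trans sub_s (subsetUr _ _).
Qed.

Lemma card_le_outdegree (I : finType) (A : {set I}) (r : rel I) c :
  {in A &, forall i j, i != j -> r i j || r j i} ->
  {in A, forall i, #|[set j in A | r i j]| <= c} ->
  #|A| <= c.*2.+1.
Proof.
move=> r_total out_le.
have outdeg i : \sum_(j in A) (r i j : nat) = #|[set j in A | r i j]|.
  rewrite -sum1_card [RHS](eq_bigl (fun j => (j \in A) && r i j)) => [|j].
    by rewrite [RHS]big_mkcondr; apply: eq_bigr => j _; case: (r i j).
  by rewrite inE.
have diag i : i \in A -> \sum_(j in A) (i == j : nat) = 1.
  move=> iA; rewrite (bigD1 i) //= eqxx big1 // => j /andP[_ ji].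
  by rewrite eq_sym (negbTE ji).
suff : #|A| * #|A| <= #|A| * c.*2.+1 by case: #|A| => // n; rewrite leq_pmul2l.
have -> : #|A| * #|A| = \sum_(i in A) \sum_(j in A) 1.
  by rewrite -sum_nat_const; apply: eq_bigr => i _; rewrite sum1_card.
apply: (@leq_trans (\sum_(i in A) \sum_(j in A) ((i == j) + r i j + r j i))).
  apply: leq_sum => i iA; apply: leq_sum => j jA.
  case: eqP => [//|/eqP ij]; have := r_total i j iA jA ij.
  by case: (r i j); case: (r j i).
rewrite [X in X <= _](eq_bigr (fun i =>
  1 + #|[set j in A | r i j]| + \sum_(j in A) (r j i : nat))); last first.
  by move=> i iA; rewrite !big_split /= diag // outdeg.
rewrite !big_split /= exchange_big /= sum1_card.
rewrite (eq_bigr _ (fun j _ => outdeg j)) -addnA addnn -mul2n.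
have : \sum_(i in A) #|[set j in A | r i j]| <= #|A| * c.
  by rewrite -sum_nat_const leq_sum.
by rewrite -[c.*2.+1]addn1 mulnDr muln1 addnC -mul2n mulnCA leq_add2r leq_mul2l /=.
Qed.

Section Datasets.
Variable X : Type.
Implicit Types (S : dataset X) (H : (X -> bool) -> Prop).

Definition erase (x : X) S : dataset X := filter (fun p => ~~ classicb (p.1 = x)) S.

Lemma In_erase x p S : List.In p (erase x S) <-> List.In p S /\ p.1 <> x.
Proof. by rewrite In_filter; case: classicbP => e; split=> -[]. Qed.

Lemma size_erase_le x S : size (erase x S) <= size S.
Proof. by rewrite size_filter count_size. Qed.

Lemma size_erase_lt x c S : List.In (x, c) S -> size (erase x S) < size S.
Proof. by move=> xS; apply: size_filter_lt xS _; rewrite negbK; apply/classicbP. Qed.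

Lemma erase_id x S : (forall c, ~ List.In (x, c) S) -> erase x S = S.
Proof.
move=> xS; apply: filter_id_In => -[y c] yS; apply/classicbP => /= yx.
by apply: (xS c); rewrite -yx.
Qed.

Lemma contradicts_erase x c S S' : ~ List.In (x, c) S -> ~ List.In (x, c) S' ->
  contradicts S S' -> contradicts (erase x S) (erase x S').
Proof.
move=> xS xS' [y [yS yS']].
have yx : y <> x.
  by move=> e; rewrite e in yS yS'; case: c xS xS' => [_ /(_ yS')|/(_ yS)].
by exists y; rewrite !In_erase.
Qed.

Lemma contradicts_of_erase x S S' :
  contradicts (erase x S) (erase x S') -> contradicts S S'.
Proof. by case=> y; rewrite !In_erase => -[[yS _] [yS' _]]; exists y. Qed.

Definition pairwise_adjacent {I : finType} (A : {set I}) (f : I -> dataset X) :=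
  {in A &, forall i j, i != j -> adjacent (f i) (f j)}.

Lemma pairwise_adjacent_sub (I : finType) (A B : {set I}) (f : I -> dataset X) :
  B \subset A -> pairwise_adjacent A f -> pairwise_adjacent B f.
Proof. by move=> /subsetP BA adjA i j /BA iA /BA jA; apply: adjA. Qed.

Lemma card_le1_of_entryless (I : finType) (A : {set I}) (f : I -> dataset X) :
  pairwise_adjacent A f -> (forall i x c, i \in A -> ~ List.In (x, c) (f i)) ->
  #|A| <= 1.
Proof.
move=> adjA no_entry; apply/card_le1_eqP => i j iA jA.
apply/eqP/negPn/negP; rewrite eq_sym => ij.
by case: (adjA i j iA jA ij) => -[y [yi _]]; [apply: no_entry yi | apply: no_entry jA yi].
Qed.

Lemma erase_weight_split x m S : size S <= m -> ~ contradicts S S ->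
  2 * 2 ^ (m - size S) <= classicb (~ List.In (x, false) S) * 2 ^ (m - size (erase x S))
                        + classicb (~ List.In (x, true) S) * 2 ^ (m - size (erase x S)).
Proof.
move=> sz nc.
have erase_gt c : List.In (x, c) S -> 2 * 2 ^ (m - size S) <= 2 ^ (m - size (erase x S)).
  by move/size_erase_lt => lt; rewrite -expnS leq_pexp2l //; lia.
case: classicbP => xf; case: classicbP => xt /=.
- by rewrite erase_id ?mul1n ?mul2n ?addnn //; case.
- by rewrite mul1n mul0n addn0; apply: (erase_gt true); apply: NNPP.
- by rewrite mul0n add0n mul1n; apply: (erase_gt false); apply: NNPP.
- by case: nc; exists x; split; apply: NNPP.
Qed.

(* Kraft's inequality: 2^-|S| is the proportion of labelings agreeing with S,
   and contradicting datasets are agreed with by disjoint sets of labelings. *)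
Lemma kraft_ineq m (I : finType) (A : {set I}) (f : I -> dataset X) :
  {in A, forall i, size (f i) <= m /\ ~ contradicts (f i) (f i)} ->
  pairwise_adjacent A f -> \sum_(i in A) 2 ^ (m - size (f i)) <= 2 ^ m.
Proof.
have [T] := ubnP (\sum_(i in A) size (f i)).
elim: T A f => // T IH A f size_lt fA adjA.
have [[i0 [x [c0 [i0A x_i0]]]]|no_entry] :=
  classic (exists i x c, i \in A /\ List.In (x, c) (f i)); last first.
  have A_le1 : #|A| <= 1.
    apply: card_le1_of_entryless adjA _ => i x c iA xi.
    by apply: no_entry; exists i, x, c.
  apply: (@leq_trans (\sum_(i in A) 2 ^ m)).
    by apply: leq_sum => i _; rewrite leq_pexp2l // leq_subr.
  by rewrite sum_nat_const -[X in _ <= X]mul1n leq_mul2r A_le1 orbT.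
pose A_ c := [set i in A | classicb (~ List.In (x, c) (f i))].
pose w i := 2 ^ (m - size (erase x (f i))).
have A_sub c : A_ c \subset A by apply/subsetP => i; rewrite inE => /andP[].
have half c : \sum_(i in A_ c) w i <= 2 ^ m.
  apply: IH.
  - rewrite -ltnS; apply: leq_trans _ size_lt; rewrite ltnS.
    apply: (@leq_trans (\sum_(i in A) size (erase x (f i))).+1).
      by rewrite ltnS [X in _ <= X](big_setID (A_ c)) /= (setIidPr (A_sub c)) leq_addr.
    rewrite (bigD1 i0) //= [X in _ <= X](bigD1 i0) //= -addSn leq_add //.
      exact: size_erase_lt x_i0.
    by apply: leq_sum => i _; apply: size_erase_le.
  - move=> i /[!inE] /andP[iA _]; have [sz nc] := fA i iA; split.
      exact: leq_trans (size_erase_le _ _) sz.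
    by move/contradicts_of_erase.
  - move=> i j /[!inE] /andP[iA /classicbP xi] /andP[jA /classicbP xj] ij.
    case: (adjA i j iA jA ij) => h; [left|right].
      exact: contradicts_erase xi xj h.
    exact: contradicts_erase xj xi h.
have sum_A_ c : \sum_(i in A) (i \in A_ c) * w i = \sum_(i in A_ c) w i.
  rewrite [RHS]big_mkcond [LHS]big_mkcond; apply: eq_bigr => i _; rewrite !inE.
  by case: (i \in A); case: classicb; rewrite ?mul1n.
suff : 2 * \sum_(i in A) 2 ^ (m - size (f i)) <= 2 * 2 ^ m by rewrite leq_pmul2l.
rewrite big_distrr /=.
rewrite (@leq_trans (\sum_(i in A) ((i \in A_ false) * w i + (i \in A_ true) * w i))) //.
  apply: leq_sum => i iA; have [sz nc] := fA i iA; rewrite !inE iA.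
  exact: erase_weight_split.
by rewrite big_split /= !sum_A_ mul2n -addnn leq_add.
Qed.

Definition restrict H x c : (X -> bool) -> Prop := fun h => H h /\ h x = c.

(* H shatters a complete mistake tree of depth n: its Littlestone dimension is
   at least n. *)
Fixpoint shatters_tree H n : Prop :=
  match n with
  | 0 => exists h, H h
  | n.+1 => exists x, shatters_tree (restrict H x false) n /\
                      shatters_tree (restrict H x true) n
  end.

Lemma realizable_restrict H x c S :
  realizable H S -> List.In (x, c) S -> realizable (restrict H x c) S.
Proof. by case=> h [Hh hS] xS; exists h; split=> //; split=> //; apply: hS xS. Qed.

Lemma realizable_cons H x c S :
  realizable (restrict H x c) S -> realizable H ((x, c) :: S).
Proof. by case=> h [[Hh hx] hS]; exists h; split=> // p /= [<-|/hS]. Qed.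

Lemma realizable_noncontradictory H S : realizable H S -> ~ contradicts S S.
Proof. by case=> h [_ hS] [x [/hS /= hx0 /hS /= hx1]]; rewrite hx0 in hx1. Qed.

Lemma clique_card_le d : forall H (I : finType) (A : {set I}) (f : I -> dataset X) m,
  ~ shatters_tree H d -> {in A, forall i, realizable H (f i) /\ size (f i) <= m} ->
  pairwise_adjacent A f -> #|A| <= (2 * m + 1) ^ d.
Proof.
elim: d => [|d IH] H I A f m not_sh fA adjA.
  suff -> : A = set0 by rewrite cards0.
  apply/setP => i; rewrite inE; apply/negP => iA.
  by have [[h [Hh _]] _] := fA i iA; apply: not_sh; exists h.
pose light x c := ~ shatters_tree (restrict H x c) d.
pose N (e : X * bool) :=
  [set j in A | classicb (List.In (e.1, ~~ e.2) (f j) /\ light e.1 (~~ e.2))].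
have N_le e : #|N e| <= (2 * m + 1) ^ d.
  case: (classic (light e.1 (~~ e.2))) => [light_e|heavy]; last first.
    suff -> : N e = set0 by rewrite cards0.
    by apply/setP => j; rewrite !inE; case: classicbP => [[_ /heavy]|]; rewrite ?andbF.
  apply: (IH _ _ _ f m light_e).
    move=> j /[!inE] /andP[jA /classicbP [ej _]]; have [rj sj] := fA j jA.
    by split=> //; apply: realizable_restrict ej.
  by apply: pairwise_adjacent_sub adjA; apply/subsetP => j /[!inE] /andP[].
pose out i := \bigcup_(e <- f i) N e.
have charge i j x : i \in A -> j \in A ->
    List.In (x, false) (f i) -> List.In (x, true) (f j) -> (j \in out i) || (i \in out j).
  move=> iA jA xi xj.
  have [light1|light0] : light x true \/ light x false.
    apply: NNPP => /not_or_and [/NNPP sh1 /NNPP sh0]; apply: not_sh; by exists x.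
  - apply/orP; left; move/subsetP: (sub_bigcup_seq N xi); apply.
    by rewrite inE jA; apply/classicbP.
  - apply/orP; right; move/subsetP: (sub_bigcup_seq N xj); apply.
    by rewrite inE iA; apply/classicbP.
apply: (@leq_trans (m * (2 * m + 1) ^ d).*2.+1).
  apply: (card_le_outdegree (r := fun i j => j \in out i)).
    move=> i j iA jA ij; case: (adjA i j iA jA ij) => -[x [xi xj]].
      exact: charge xi xj.
    by rewrite orbC; apply: charge xi xj.
  move=> i iA; apply: (@leq_trans #|out i|).
    by apply: subset_leq_card; apply/subsetP => j /[!inE] /andP[].
  apply: leq_trans (card_bigcup_seq_le _) _ => [e _|]; first exact: N_le.
  by rewrite leq_mul2r (proj2 (fA i iA)) orbT.
rewrite expnS -mul2n mulnA; have := expn_gt0 (2 * m + 1) d; nia.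
Qed.

Lemma adjacent_cons a b S S' : adjacent S S' -> adjacent (a :: S) (b :: S').
Proof. by case=> -[x [xS xS']]; [left|right]; exists x; split; right. Qed.

Lemma shatters_tree_seq n : forall H, shatters_tree H n ->
  exists L : seq (dataset X),
    [/\ size L = 2 ^ n, forall i, i < 2 ^ n -> vertex H n (nth [::] L i) &
        forall i j, i < 2 ^ n -> j < 2 ^ n -> i != j ->
          adjacent (nth [::] L i) (nth [::] L j)].
Proof.
elim: n => [|n IH] H /=.
  case=> h Hh; exists [:: [::]]; rewrite expn0; split=> // [[|//] _|[|//] [|//] //].
  by split=> //; exists h; split=> // p [].
case=> x [/IH [L0 [size0 v0 adj0]] /IH [L1 [size1 v1 adj1]]].
exists (map (cons (x, false)) L0 ++ map (cons (x, true)) L1).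
have nthE i : i < 2 ^ n.+1 ->
    nth [::] (map (cons (x, false)) L0 ++ map (cons (x, true)) L1) i =
    if i < 2 ^ n then (x, false) :: nth [::] L0 i
    else (x, true) :: nth [::] L1 (i - 2 ^ n).
  rewrite expnS mul2n -addnn nth_cat size_map size0 => lt_i.
  by case: ifP => lt_in; rewrite (nth_map [::]) ?size0 ?size1 //; lia.
split.
- by rewrite size_cat !size_map size0 size1 expnS mul2n addnn.
- move=> i lt_i; rewrite nthE //; case: ifP => lt_in.
    by have [sz r] := v0 i lt_in; split; [rewrite /= sz | apply: realizable_cons].
  have [|sz r] := v1 (i - 2 ^ n); first by move: lt_i; rewrite expnS; lia.
  by split; [rewrite /= sz | apply: realizable_cons].
- move=> i j lt_i lt_j ij; rewrite !nthE //.
  case: ifP => lt_in; case: ifP => lt_jn.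
  + exact/adjacent_cons/adj0.
  + by left; exists x; split; left.
  + by right; exists x; split; left.
  + apply/adjacent_cons/adj1; move: lt_i lt_j ij lt_in lt_jn; rewrite expnS; lia.
Qed.

Lemma shatters_tree_clique H n : shatters_tree H n -> has_clique H n (2 ^ n).
Proof.
case/shatters_tree_seq => L [_ vL adjL].
exists (fun i : 'I_(2 ^ n) => nth [::] L i); split; last split.
- move=> i j eq_ij; apply/eqP; apply: contraT => ij.
  have := adjL i j (ltn_ord i) (ltn_ord j) ij; rewrite eq_ij.
  by have [_ /realizable_noncontradictory rj] := vL j (ltn_ord j); case.
- by move=> i; apply: vL.
- by move=> i j; apply: adjL; apply: ltn_ord.
Qed.

Lemma has_clique_le_exp2 H m k : has_clique H m k -> k <= 2 ^ m.
Proof.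
case=> f [_ [vf adjf]].
have := @kraft_ineq m _ [set: 'I_k] f.
rewrite (eq_bigr (fun=> 1)) => [|i _]; last by rewrite (proj1 (vf i)) subnn.
rewrite sum1_card cardsT card_ord; apply=> [i _|i j _ _]; last exact: adjf.
have [sz /realizable_noncontradictory] := vf i; by rewrite sz.
Qed.

Lemma has_clique_le_poly H d m k :
  ~ shatters_tree H d -> has_clique H m k -> k <= (2 * m + 1) ^ d.
Proof.
move=> not_sh [f [_ [vf adjf]]]; rewrite -[k]card_ord -cardsT.
apply: clique_card_le not_sh _ _ => [i _|i j _ _]; last exact: adjf.
by have [-> r] := vf i.
Qed.

End Datasets.

Lemma monomial_lt_exp2 C n : exists m, 0 < m /\ C * m ^ n < 2 ^ m.
Proof.
(* m = 4^t: then C m^n < 2^(C + 2tn) and C + 2tn <= t^2 < 4^t. *)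
pose t := 2 * n + C + 1.
have t_lt : t < 2 ^ t := ltn_expl t (isT : 1 < 2).
exists (2 ^ (2 * t)); split; first exact: expn_gt0.
rewrite -expnM; apply: (@leq_trans (2 ^ (C + 2 * t * n))).
  by rewrite expnD ltn_pmul2r ?expn_gt0 // ltn_expl.
rewrite leq_exp2l // mul2n -addnn expnD.
by move: t_lt; rewrite /t; set a := 2 ^ _; nia.
Qed.

Import Order.TTheory.
Local Open Scope ring_scope.

Lemma horner_le_monomial (P : {poly R}) :
  exists C n : nat, forall m : nat, (0 < m)%nat -> P.[m%:R] <= (C * m ^ n)%nat%:R.
Proof.
pose S := \sum_(i < size P) `|P`_i|.
have S_ge0 : 0 <= S by apply: sumr_ge0 => i _; exact: normr_ge0.
exists (Num.Def.archi_bound S), (size P) => m m_gt0.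
have m_ge1 : 1 <= m%:R :> R by rewrite ler1n.
have m_ge0 : 0 <= m%:R :> R by apply: le_trans m_ge1.
rewrite natrM natrX horner_coef.
apply: (@le_trans _ _ (S * m%:R ^+ size P)).
  rewrite /S mulr_suml; apply: ler_sum => i _.
  apply: (@le_trans _ _ (`|P`_i| * m%:R ^+ i)).
    by apply: ler_wpM2r; [exact: exprn_ge0 | exact: ler_norm].
  by apply: ler_wpM2l; [exact: normr_ge0 | apply: ler_weXn2l => //; apply: ltnW].
by apply: ler_wpM2r; [exact: exprn_ge0 | exact: ltW (archi_boundP S_ge0)].
Qed.

Lemma exists_horner_lt_exp2 (P : {poly R}) : exists m : nat, P.[m%:R] < (2 ^ m)%nat%:R.
Proof.
have [C [n P_le]] := horner_le_monomial P.
have [m [m_gt0 lt_m]] := monomial_lt_exp2 C n.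
by exists m; apply: le_lt_trans (P_le m m_gt0) _; rewrite ltr_nat.
Qed.

Lemma horner_2X1_exp d (m : nat) :
  (('X *+ 2 + 1) ^+ d).[m%:R] = ((2 * m + 1) ^ d)%nat%:R :> R.
Proof. by rewrite horner_exp !hornerE natrX natrD natrM mulr_natl. Qed.

Theorem mainTheorem2 (X : Type) (H : (X -> bool) -> Prop) :
  let case1 := forall m : nat, clique_number_eq H m (expn 2 m) in
  let case2 := exists P : {poly R}, forall m : nat, clique_number_le H m P.[m%:R] in
  (case1 \/ case2) /\ ~ (case1 /\ case2).
Proof.
move=> case1 case2.
have not_both : ~ (case1 /\ case2).
  case=> c1 [P P_bound]; have [m lt_m] := exists_horner_lt_exp2 P.
  by have := P_bound m _ (proj1 (c1 m)); rewrite leNgt lt_m.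
split=> //.
have [sh|/not_all_ex_not [d not_sh]] := classic (forall n, shatters_tree H n).
  left=> m; split; first exact: shatters_tree_clique.
  exact: has_clique_le_exp2.
right; exists (('X *+ 2 + 1) ^+ d) => m k /(has_clique_le_poly not_sh).
by rewrite horner_2X1_exp ler_nat.
Qed.
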